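(* Let $T$ be the BFS tree produced by temporal BFS on a temporal graph $G=(V,E)$ from source $s$ with starting time $t_s$, and let $v\neq s$. If $v$ occurs in $T$, let $v_o$ be its occurrence of smallest level; then the sequence of tree edges on the path from the root to $v_o$ is a shortest temporal path from $s$ to $v$, i.e. a temporal path from $s$ to $v$ starting at or after $t_s$ whose number of hops is minimal among all temporal paths from $s$ to $v$ starting at or after $t_s$. If $v$ does not occur in $T$, then there is no temporal path from $s$ to $v$ starting at or after $t_s$.
   Context: A temporal graph is a pair $G=(V,E)$ where $V$ is a finite set of vertices and $E$ is a finite set of temporal edges, i.e. triples $(u,v,t)$ with $u,v\in V$, $u\neq v$, $t\in\mathbb{R}$ (the time at which the edge is active); distinct elements of $E$ are distinct triples. Fix $t_s\in\mathbb{R}$ and $s\in V$. A temporal path from $x$ to $y$ (starting at or after $t_s$) is a sequence $P=\langle (w_1,w_2,t_1),\dots,(w_k,w_{k+1},t_k)\rangle$ of $k\ge1$ edges of $E$ with $w_1=x$, $w_{k+1}=y$ and $t_s\le t_1\le t_2\le\dots\le t_k$; its number of hops is $k$. Temporal BFS. Records are tuples $(x,d,\tau,p)$ (vertex $x$, level $d$, time $\tau$, predecessor record $p$ or none); every record ever created is an occurrence (node) of the BFS tree $T$, rooted at the initial record, with a tree edge from the predecessor record to the record; the level and time of an occurrence are the final values of its fields. For each $x\in V$ a current value $\sigma(x)$ is kept, initially $\infty$, and set to $\tau$ whenever a record of $x$ is created or its time is updated to $\tau$. Initially the FIFO queue $Q$ contains only $(s,0,t_s,\text{none})$ and $\sigma(s)=t_s$;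 no edge is traversed. While $Q\neq\emptyset$: pop the front record $R=(u,d_u,\sigma_u,p_u)$; let $B$ be the set of edges $(u,v,t)\in E$ not yet traversed with $\sigma_u\le t$; for each vertex $v$ such that $B$ contains an edge to $v$ (in any order), let $e=(u,v,t)$ be the edge of $B$ to $v$ with smallest $t$, mark $e$ traversed, and: (i) if $Q$ contains no record of $v$ and $\sigma(v)>t$, create $(v,d_u+1,t,R)$ and append it to $Q$; (ii) if $Q$ contains a record of $v$ with level $d_u+1$ and $\sigma(v)>t$, set that record's time to $t$ and predecessor to $R$; (iii) if $Q$ contains a record of $v$ but none with level $d_u+1$, and $\sigma(v)>t$, create $(v,d_u+1,t,R)$ and append it to $Q$. When a record's predecessor is $R$, the tree edge into it corresponds to the last edge $e=(u,v,t)$ that created or updated it. *)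

From Stdlib Require Import Reals List.
Import ListNotations.
Open Scope R_scope.
Set Implicit Arguments.

Definition edge (V : Type) := (V * V * R)%type.
Definition esrc {V : Type} (e : edge V) : V := fst (fst e).
Definition etgt {V : Type} (e : edge V) : V := snd (fst e).
Definition etime {V : Type} (e : edge V) : R := snd e.

Fixpoint is_tpath {V : Type} (E : list (edge V)) (x y : V) (tmin : R)
    (P : list (edge V)) : Prop :=
  match P with
  | [] => False
  | e :: P' =>
      esrc e = x /\ In e E /\ tmin <= etime e /\
      match P' with
      | [] => etgt e = y
      | _ => is_tpath E (etgt e) y (etime e) P'
      end
  end.

Definition shortest_tpath {V : Type} (E : list (edge V)) (x y : V) (ts : R)
    (P : list (edge V)) : Prop :=
  is_tpath E x y ts P /\
  forall P', is_tpath E x y ts P' -> (length P <= length P')%nat.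

(** BFS records (x, d, tau, p), identified by their index in the record store;
    [re] is the last edge that created/updated the record (the tree edge into it). *)
Record brec (V : Type) := mkRec {
  rv : V; rd : nat; rt : R; rp : option nat; re : option (edge V) }.

Record bstate (V : Type) := mkState {
  recs : list (brec V);      (* all records ever created = nodes of T *)
  queue : list nat;          (* FIFO queue of record indices *)
  sigma : V -> option R;     (* None = infinity *)
  trav : list (edge V) }.

Definition sigma_gt (o : option R) (t : R) : Prop :=
  match o with None => True | Some x => t < x end.

Definition sigma_upd {V : Type} (s : V -> option R) (v : V) (t : R)
    (s' : V -> option R) : Prop :=
  s' v = Some t /\ forall x, x <> v -> s' x = s x.

Fixpoint upd_nth {A : Type} (l : list A) (i : nat) (x : A) : list A :=
  match l, i with
  | [], _ => []
  | _ :: l', O => x :: l'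
  | y :: l', S i' => y :: upd_nth l' i' x
  end.

Definition queue_has {V : Type} (st : bstate V) (v : V) (P : nat -> Prop) : Prop :=
  exists i r, In i (queue st) /\ nth_error (recs st) i = Some r /\
              rv r = v /\ P (rd r).

(** Handling of the chosen edge e = (u,v,t) while processing popped record
    number [ridx] of level [du]. *)
Inductive handle {V : Type} (ridx du : nat) (e : edge V) :
    bstate V -> bstate V -> Prop :=
| H_new (st : bstate V) s' :
    ~ queue_has st (etgt e) (fun _ => True) ->
    sigma_gt (sigma st (etgt e)) (etime e) ->
    sigma_upd (sigma st) (etgt e) (etime e) s' ->
    handle ridx du e st
      (mkState (recs st ++ [mkRec (etgt e) (S du) (etime e) (Some ridx) (Some e)])
               (queue st ++ [length (recs st)]) s' (e :: trav st))
| H_update (st : bstate V) s' i r :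
    In i (queue st) -> nth_error (recs st) i = Some r ->
    rv r = etgt e -> rd r = S du ->
    sigma_gt (sigma st (etgt e)) (etime e) ->
    sigma_upd (sigma st) (etgt e) (etime e) s' ->
    handle ridx du e st
      (mkState (upd_nth (recs st) i (mkRec (etgt e) (rd r) (etime e) (Some ridx) (Some e)))
               (queue st) s' (e :: trav st))
| H_again (st : bstate V) s' :
    queue_has st (etgt e) (fun _ => True) ->
    ~ queue_has st (etgt e) (fun d => d = S du) ->
    sigma_gt (sigma st (etgt e)) (etime e) ->
    sigma_upd (sigma st) (etgt e) (etime e) s' ->
    handle ridx du e st
      (mkState (recs st ++ [mkRec (etgt e) (S du) (etime e) (Some ridx) (Some e)])
               (queue st ++ [length (recs st)]) s' (e :: trav st))
| H_skip (st : bstate V) :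
    ~ sigma_gt (sigma st (etgt e)) (etime e) ->
    handle ridx du e st (mkState (recs st) (queue st) (sigma st) (e :: trav st)).

Inductive process {V : Type} (ridx du : nat) (B : list (edge V)) :
    bstate V -> list V -> bstate V -> Prop :=
| P_nil st : process ridx du B st [] st
| P_cons st v vs e st1 st2 :
    In e B -> etgt e = v ->
    (forall e', In e' B -> etgt e' = v -> etime e <= etime e') ->
    handle ridx du e st st1 ->
    process ridx du B st1 vs st2 ->
    process ridx du B st (v :: vs) st2.

Inductive bfs_step {V : Type} (E : list (edge V)) : bstate V -> bstate V -> Prop :=
| Step st r q R B vs st' :
    queue st = r :: q ->
    nth_error (recs st) r = Some R ->
    (forall e, In e B <->
       (In e E /\ ~ In e (trav st) /\ esrc e = rv R /\ rt R <= etime e)) ->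
    NoDup vs ->
    (forall v, In v vs <-> exists e, In e B /\ etgt e = v) ->
    process r (rd R) B (mkState (recs st) q (sigma st) (trav st)) vs st' ->
    bfs_step E st st'.

Inductive bfs_reach {V : Type} (E : list (edge V)) : bstate V -> bstate V -> Prop :=
| R_refl st : bfs_reach E st st
| R_step st st1 st2 : bfs_step E st st1 -> bfs_reach E st1 st2 -> bfs_reach E st st2.

Definition bfs_init {V : Type} (s : V) (ts : R) (st : bstate V) : Prop :=
  recs st = [mkRec s O ts None None] /\ queue st = [O] /\
  sigma st s = Some ts /\ (forall x, x <> s -> sigma st x = None) /\
  trav st = [].

Inductive tree_path {V : Type} (rs : list (brec V)) : nat -> list (edge V) -> Prop :=
| TP_root : tree_path rs O []
| TP_step i r j e P :
    nth_error rs i = Some r -> rp r = Some j -> re r = Some e ->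
    tree_path rs j P -> tree_path rs i (P ++ [e]).

From Pilot Require Import Defs.
From Stdlib Require Import Reals List Lia Lra Classical Wf_nat.
Import ListNotations.
Open Scope R_scope.

(** The proof is an invariant argument over the run of the algorithm.
    After [k] records have been popped, the record store is well formed
    ([wf_store]): the queue holds exactly the unpopped records [k, k+1, ...];
    every non-root record is linked to an earlier, already popped parent by a
    valid temporal edge; levels never decrease along the store; the current
    values [sigma] agree with the record times; and every traversed edge
    [(u,w,t)] is "covered", i.e. [w] has a record of level at most one more
    than the record that traversed it and time at most [t] ([reached]).
    The stronger invariant [bfs_inv] also says that every edge leaving a
    popped record at a feasible time is covered.  Both are preserved by each
    edge handled ([edge_post]) and hence by each loop iteration.

    When the queue is empty every record has been popped.  Following tree
    links backwards yields, for each record, a temporal walk ([twalk]) from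
    [s] of length its level ([tree_walk]); conversely, coverage transports
    any temporal walk from [s] into a record of its endpoint of level at most
    its length ([walk_reached]). *)

Lemma nth_error_lt {A : Type} (l : list A) j x :
  nth_error l j = Some x -> (j < length l)%nat.
Proof. intro H. apply nth_error_Some. congruence. Qed.

Lemma nth_error_snoc_last {A : Type} (l : list A) x :
  nth_error (l ++ [x]) (length l) = Some x.
Proof. rewrite nth_error_app2, Nat.sub_diag by lia. reflexivity. Qed.

Lemma nth_error_snoc_other {A : Type} (l : list A) x j :
  j <> length l -> nth_error (l ++ [x]) j = nth_error l j.
Proof.
  intro Hj. destruct (Nat.lt_ge_cases j (length l)) as [Hlt|Hge].
  - apply nth_error_app1. exact Hlt.
  - rewrite nth_error_app2 by exact Hge.
    rewrite (proj2 (nth_error_None l j)) by exact Hge.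
    destruct (j - length l)%nat as [|m] eqn:Hd; [lia|destruct m; reflexivity].
Qed.

Lemma nth_error_upd_same {A : Type} (l : list A) i x :
  (i < length l)%nat -> nth_error (upd_nth l i x) i = Some x.
Proof.
  revert i; induction l as [|y l IH]; intros [|i] Hi; simpl in *; try lia; auto with arith.
Qed.

Lemma nth_error_upd_other {A : Type} (l : list A) i x j :
  j <> i -> nth_error (upd_nth l i x) j = nth_error l j.
Proof.
  revert i j; induction l as [|y l IH]; intros [|i] [|j] Hij; simpl; auto; try lia.
Qed.

Lemma length_upd_nth {A : Type} (l : list A) i x : length (upd_nth l i x) = length l.
Proof. revert i; induction l; intros [|i]; simpl; auto. Qed.

Lemma sigma_upd_cases {V : Type} (sg sg' : V -> option R) v t w :
  sigma_upd sg v t sg' -> (w = v /\ sg' w = Some t) \/ (w <> v /\ sg' w = sg w).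
Proof.
  intros [Hv Hother]. destruct (classic (w = v)) as [->|Hw]; [left|right]; auto.
Qed.

Section Notions.
Context {V : Type}.

Definition root (s : V) (ts : R) : brec V := mkRec s O ts None None.
Definition child_record (k L : nat) (e : edge V) : brec V :=
  mkRec (etgt e) (S L) (etime e) (Some k) (Some e).

Definition reached (st : bstate V) (d : nat) (v : V) (t : R) : Prop :=
  exists j rj, nth_error (recs st) j = Some rj /\ rv rj = v /\
               (rd rj <= d)%nat /\ rt rj <= t.

Definition refines (st st' : bstate V) : Prop :=
  forall j r, nth_error (recs st) j = Some r ->
  exists r', nth_error (recs st') j = Some r' /\
             rv r' = rv r /\ rd r' = rd r /\ rt r' <= rt r.

Definition agree_below (k : nat) (rs rs' : list (brec V)) : Prop :=
  forall j, (j < k)%nat -> nth_error rs' j = nth_error rs j.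

Definition levels_at_most (st : bstate V) (d : nat) : Prop :=
  forall j rj, nth_error (recs st) j = Some rj -> (rd rj <= d)%nat.

Inductive tree_link (E : list (edge V)) (rs : list (brec V)) (k i : nat) (r : brec V) : Prop :=
| TreeLink j rj e :
    (j < i)%nat -> (j < k)%nat -> rp r = Some j -> re r = Some e ->
    nth_error rs j = Some rj -> In e E -> esrc e = rv rj -> etgt e = rv r ->
    etime e = rt r -> rt rj <= etime e -> rd r = S (rd rj) ->
    tree_link E rs k i r.

Record wf_store (E : list (edge V)) (s : V) (ts : R) (k : nat) (st : bstate V) : Prop := {
  wf_queue : queue st = seq k (length (recs st) - k);
  wf_popped : (k <= length (recs st))%nat;
  wf_root : nth_error (recs st) 0 = Some (root s ts);
  wf_link : forall i r, nth_error (recs st) i = Some r ->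
    (i = O /\ r = root s ts) \/ tree_link E (recs st) k i r;
  wf_levels : forall i j ri rj, (i <= j)%nat -> nth_error (recs st) i = Some ri ->
    nth_error (recs st) j = Some rj -> (rd ri <= rd rj)%nat;
  wf_sigma_le : forall i r, nth_error (recs st) i = Some r ->
    exists tau, Defs.sigma st (rv r) = Some tau /\ tau <= rt r;
  wf_sigma_attained : forall v tau, Defs.sigma st v = Some tau ->
    exists i r, nth_error (recs st) i = Some r /\ rv r = v /\ rt r = tau;
  wf_traversed : forall e, In e (trav st) -> exists j rj, (j < k)%nat /\
    nth_error (recs st) j = Some rj /\ reached st (S (rd rj)) (etgt e) (etime e) }.

Record edge_post (E : list (edge V)) (s : V) (ts : R) (k L : nat) (e : edge V)
    (st st1 : bstate V) : Prop := {
  post_wf : wf_store E s ts (S k) st1;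
  post_levels : levels_at_most st1 (S L);
  post_refines : refines st st1;
  post_prefix : agree_below (S k) (recs st) (recs st1);
  post_reached : reached st1 (S L) (etgt e) (etime e) }.

Record bfs_inv (E : list (edge V)) (s : V) (ts : R) (k : nat) (st : bstate V) : Prop := {
  inv_wf : wf_store E s ts k st;
  inv_levels : (k < length (recs st))%nat -> forall rk, nth_error (recs st) k = Some rk ->
    levels_at_most st (S (rd rk));
  inv_explored : forall i ri, (i < k)%nat -> nth_error (recs st) i = Some ri ->
    forall e, In e E -> esrc e = rv ri -> rt ri <= etime e ->
    reached st (S (rd ri)) (etgt e) (etime e) }.

Lemma refines_refl (st : bstate V) : refines st st.
Proof. intros j r H. exists r. repeat split; auto. lra. Qed.

Lemma refines_trans {a b c : bstate V} : refines a b -> refines b c -> refines a c.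
Proof.
  intros Hab Hbc j r H.
  destruct (Hab _ _ H) as (r1 & H1 & V1 & D1 & T1).
  destruct (Hbc _ _ H1) as (r2 & H2 & V2 & D2 & T2).
  exists r2. repeat split; auto; try congruence. lra.
Qed.

Lemma reached_refines {st st' : bstate V} {d v t} :
  refines st st' -> reached st d v t -> reached st' d v t.
Proof.
  intros Href (j & rj & Hj & Hv & Hd & Ht).
  destruct (Href _ _ Hj) as (r' & H' & V' & D' & T').
  exists j, r'. repeat split; auto; try congruence; try lia. lra.
Qed.

Lemma reached_weaken {st : bstate V} {d d' v t t'} :
  (d <= d')%nat -> t <= t' -> reached st d v t -> reached st d' v t'.
Proof.
  intros Hd Ht (j & rj & Hj & Hv & Hd' & Ht'). exists j, rj. repeat split; auto; try lia. lra.
Qed.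

Lemma tree_link_mono {E rs rs' k k' i r} :
  agree_below k rs rs' -> (k <= k')%nat -> tree_link E rs k i r -> tree_link E rs' k' i r.
Proof.
  intros Hagree Hk [j rj e Hji Hjk Hp He Hj HE Hs Ht Htime Hle Hd].
  apply TreeLink with j rj e; auto; try lia. rewrite Hagree; auto.
Qed.

End Notions.

Arguments wf_queue {V E s ts k st} _.
Arguments wf_popped {V E s ts k st} _.
Arguments wf_root {V E s ts k st} _.
Arguments wf_link {V E s ts k st} _ {i r} _.
Arguments wf_levels {V E s ts k st} _ {i j ri rj} _ _ _.
Arguments wf_sigma_le {V E s ts k st} _ {i r} _.
Arguments wf_sigma_attained {V E s ts k st} _ {v tau} _.
Arguments wf_traversed {V E s ts k st} _ {e} _.
Arguments post_wf {V E s ts k L e st st1} _.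
Arguments post_levels {V E s ts k L e st st1} _.
Arguments post_refines {V E s ts k L e st st1} _.
Arguments post_prefix {V E s ts k L e st st1} _.
Arguments post_reached {V E s ts k L e st st1} _.
Arguments inv_wf {V E s ts k st} _.
Arguments inv_levels {V E s ts k st} _ _ {rk} _.
Arguments inv_explored {V E s ts k st} _ {i ri} _ _ {e} _ _ _.

(** Cases (i)-(iii) of the algorithm all write the record
    [child_record k L e] at some unpopped index [n] (a fresh index for (i)
    and (iii), an existing record of the same vertex and level for (ii)),
    lower [sigma (etgt e)] to [etime e], and mark [e] traversed. *)

Section WriteRecord.
Context {V : Type} (E : list (edge V)) (s : V) (ts : R).
Variables (k L n : nat) (Rk : brec V) (e : edge V) (st st1 : bstate V).
Hypothesis Hwf : wf_store E s ts (S k) st.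
Hypothesis HRk : nth_error (recs st) k = Some Rk.
Hypothesis HL : rd Rk = L.
Hypothesis HeE : In e E.
Hypothesis Hsrc : esrc e = rv Rk.
Hypothesis Hlate : rt Rk <= etime e.
Hypothesis Hlevels : levels_at_most st (S L).
Hypothesis Hgt : sigma_gt (Defs.sigma st (etgt e)) (etime e).
Hypothesis Hsig : sigma_upd (Defs.sigma st) (etgt e) (etime e) (Defs.sigma st1).
Hypothesis Htrav : trav st1 = e :: trav st.
Hypothesis Hqueue : queue st1 = seq (S k) (length (recs st1) - S k).
Hypothesis Hn : (S k <= n)%nat.
Hypothesis Hnew : nth_error (recs st1) n = Some (child_record k L e).
Hypothesis Hold : forall j, j <> n -> nth_error (recs st1) j = nth_error (recs st) j.
Hypothesis Hprev : forall r, nth_error (recs st) n = Some r -> rv r = etgt e /\ rd r = S L.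

Lemma write_cases j r : nth_error (recs st1) j = Some r ->
  (j <> n /\ nth_error (recs st) j = Some r) \/ (j = n /\ r = child_record k L e).
Proof.
  intro Hj. destruct (Nat.eq_dec j n) as [->|Hjn].
  - right. split; congruence.
  - left. rewrite <- Hold; auto.
Qed.

Lemma write_prefix : agree_below (S k) (recs st) (recs st1).
Proof. intros j Hj. apply Hold. lia. Qed.

(** Since [sigma (etgt e) > etime e], the new time beats every old record of
    the target vertex. *)
Lemma old_target_later j r :
  nth_error (recs st) j = Some r -> rv r = etgt e -> etime e < rt r.
Proof.
  intros Hj Hv. destruct (wf_sigma_le Hwf Hj) as (tau & Htau & Hle).
  rewrite <- Hv, Htau in Hgt. simpl in Hgt. lra.
Qed.

Lemma write_refines : refines st st1.
Proof.
  intros j r Hj. destruct (Nat.eq_dec j n) as [->|Hjn].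
  - destruct (Hprev _ Hj) as [Hv Hd]. exists (child_record k L e).
    repeat split; auto. simpl. apply Rlt_le, (old_target_later n); auto.
  - exists r. rewrite Hold; auto. repeat split; auto. lra.
Qed.

Lemma write_reached : reached st1 (S L) (etgt e) (etime e).
Proof. exists n, (child_record k L e). repeat split; simpl; auto. lra. Qed.

Lemma write_link i r : nth_error (recs st1) i = Some r ->
  (i = O /\ r = root s ts) \/ tree_link E (recs st1) (S k) i r.
Proof.
  intro Hi. destruct (write_cases _ _ Hi) as [[_ Hold_i]|[-> ->]].
  - destruct (wf_link Hwf Hold_i) as [Hroot|Hlink]; [left; exact Hroot|right].
    exact (tree_link_mono write_prefix (le_n _) Hlink).
  - right. apply TreeLink with k Rk e; simpl; auto; try lia; try congruence.
    rewrite write_prefix; auto.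
Qed.

(** Level [S L] fits the level order: earlier records have level at most
    [S L], later ones at least the level of the replaced record. *)
Lemma write_levels i j ri rj : (i <= j)%nat ->
  nth_error (recs st1) i = Some ri -> nth_error (recs st1) j = Some rj -> (rd ri <= rd rj)%nat.
Proof.
  intros Hij Hi Hj.
  destruct (write_cases _ _ Hi) as [[Hin Hi']|[-> ->]];
  destruct (write_cases _ _ Hj) as [[Hjn Hj']|[-> ->]].
  - exact (wf_levels Hwf Hij Hi' Hj').
  - exact (Hlevels _ _ Hi').
  - (* a later old record exists, so an old record of level S L sat at n *)
    assert (Hnlt : (n < length (recs st))%nat) by (pose proof (nth_error_lt _ _ _ Hj'); lia).
    destruct (nth_error (recs st) n) as [rn|] eqn:Hrn;
      [|apply nth_error_None in Hrn; lia].
    destruct (Hprev _ eq_refl) as [_ Hd]. simpl. rewrite <- Hd.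
    exact (wf_levels Hwf Hij Hrn Hj').
  - lia.
Qed.

Lemma write_sigma_le i r : nth_error (recs st1) i = Some r ->
  exists tau, Defs.sigma st1 (rv r) = Some tau /\ tau <= rt r.
Proof.
  intro Hi. destruct (sigma_upd_cases _ _ _ _ (rv r) Hsig) as [[Hv Hs]|[Hv Hs]];
    rewrite Hs.
  - exists (etime e). split; auto.
    destruct (write_cases _ _ Hi) as [[_ Hi']|[-> ->]]; simpl; [|lra].
    apply Rlt_le, (old_target_later i); auto.
  - destruct (write_cases _ _ Hi) as [[_ Hi']|[-> ->]].
    + exact (wf_sigma_le Hwf Hi').
    + simpl in Hv. congruence.
Qed.

Lemma write_sigma_attained v tau : Defs.sigma st1 v = Some tau ->
  exists i r, nth_error (recs st1) i = Some r /\ rv r = v /\ rt r = tau.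
Proof.
  intro Hv. destruct (sigma_upd_cases _ _ _ _ v Hsig) as [[-> Hs]|[Hne Hs]];
    rewrite Hs in Hv.
  - injection Hv as <-. exists n, (child_record k L e). auto.
  - destruct (wf_sigma_attained Hwf Hv) as (i & r & Hi & Hrv & Hrt).
    exists i, r. split; auto. rewrite Hold; auto.
    intros ->. apply Hne. rewrite <- Hrv. apply (Hprev _ Hi).
Qed.

Lemma write_traversed e' : In e' (trav st1) -> exists j rj, (j < S k)%nat /\
  nth_error (recs st1) j = Some rj /\ reached st1 (S (rd rj)) (etgt e') (etime e').
Proof.
  rewrite Htrav. intros [<-|Hin].
  - exists k, Rk. rewrite write_prefix by lia. rewrite HL.
    repeat split; auto using write_reached.
  - destruct (wf_traversed Hwf Hin) as (j & rj & Hj & Hrj & Hreach).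
    exists j, rj. rewrite write_prefix by lia.
    repeat split; auto. exact (reached_refines write_refines Hreach).
Qed.

Lemma write_post : edge_post E s ts k L e st st1.
Proof.
  assert (Hlen := nth_error_lt _ _ _ Hnew).
  constructor.
  - refine {| wf_queue := Hqueue; wf_link := write_link; wf_levels := write_levels;
               wf_sigma_le := write_sigma_le; wf_sigma_attained := write_sigma_attained;
               wf_traversed := write_traversed |}; [lia|].
    rewrite Hold by lia. exact (wf_root Hwf).
  - intros j rj Hj. destruct (write_cases _ _ Hj) as [[_ Hj']|[-> ->]]; simpl; eauto.
  - exact write_refines.
  - exact write_prefix.
  - exact write_reached.
Qed.

End WriteRecord.

Section HandleEdge.
Context {V : Type} (E : list (edge V)) (s : V) (ts : R).
Variables (k L : nat) (Rk : brec V) (e : edge V) (st : bstate V).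
Hypothesis Hwf : wf_store E s ts (S k) st.
Hypothesis HRk : nth_error (recs st) k = Some Rk.
Hypothesis HL : rd Rk = L.
Hypothesis HeE : In e E.
Hypothesis Hsrc : esrc e = rv Rk.
Hypothesis Hlate : rt Rk <= etime e.
Hypothesis Hlevels : levels_at_most st (S L).

Lemma append_post s' :
  sigma_gt (Defs.sigma st (etgt e)) (etime e) ->
  sigma_upd (Defs.sigma st) (etgt e) (etime e) s' ->
  edge_post E s ts k L e st
    (mkState (recs st ++ [child_record k L e]) (queue st ++ [length (recs st)])
             s' (e :: trav st)).
Proof.
  intros Hgt Hsig. assert (Hk := nth_error_lt _ _ _ HRk).
  eapply write_post with (n := length (recs st)); simpl; eauto.
  - rewrite (wf_queue Hwf), length_app. simpl.
    replace (length (recs st) + 1 - S k)%nat with (S (length (recs st) - S k)) by lia.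
    rewrite seq_S. repeat f_equal. lia.
  - apply nth_error_snoc_last.
  - apply nth_error_snoc_other.
  - intros r Hr. apply nth_error_lt in Hr. lia.
Qed.

Lemma update_post s' i r :
  In i (queue st) -> nth_error (recs st) i = Some r ->
  rv r = etgt e -> rd r = S L ->
  sigma_gt (Defs.sigma st (etgt e)) (etime e) ->
  sigma_upd (Defs.sigma st) (etgt e) (etime e) s' ->
  edge_post E s ts k L e st
    (mkState (upd_nth (recs st) i (mkRec (etgt e) (rd r) (etime e) (Some k) (Some e)))
             (queue st) s' (e :: trav st)).
Proof.
  intros Hiq Hi Hrv Hrd Hgt Hsig. rewrite Hrd.
  assert (Hki : (S k <= i)%nat).
  { rewrite (wf_queue Hwf) in Hiq. apply in_seq in Hiq. lia. }
  eapply write_post with (n := i); simpl; eauto.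
  - rewrite length_upd_nth. exact (wf_queue Hwf).
  - apply nth_error_upd_same. exact (nth_error_lt _ _ _ Hi).
  - intros j Hj. apply nth_error_upd_other. exact Hj.
  - intros r' Hr'. rewrite Hi in Hr'. injection Hr' as <-. auto.
Qed.

(** The edge arrives too late: [sigma (etgt e)] already certifies coverage. *)
Lemma skip_post :
  ~ sigma_gt (Defs.sigma st (etgt e)) (etime e) ->
  edge_post E s ts k L e st (mkState (recs st) (queue st) (Defs.sigma st) (e :: trav st)).
Proof.
  intro Hle. set (st1 := mkState (recs st) (queue st) (Defs.sigma st) (e :: trav st)).
  assert (Href : refines st st1) by exact (refines_refl st).
  assert (Hreach : reached st1 (S L) (etgt e) (etime e)).
  { destruct (Defs.sigma st (etgt e)) as [tau|] eqn:Htau; simpl in Hle; [|tauto].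
    destruct (wf_sigma_attained Hwf Htau) as (m & rm & Hm & Hv & Ht).
    exists m, rm. repeat split; eauto. lra. }
  constructor; auto.
  - destruct Hwf as [Hq Hpop Hroot Hlink Hmono Hsle Hsat Htrav].
    constructor; auto.
    intros e' [<-|Hin].
    + exists k, Rk. rewrite HL. auto.
    + destruct (Htrav _ Hin) as (j & rj & Hj & Hrj & Hr).
      exists j, rj. repeat split; auto.
  - intros j Hj. reflexivity.
Qed.

End HandleEdge.

Lemma handle_post {V : Type} {E : list (edge V)} {s ts k L Rk e} {st st1 : bstate V} :
  handle k L e st st1 ->
  wf_store E s ts (S k) st -> nth_error (recs st) k = Some Rk -> rd Rk = L ->
  In e E -> esrc e = rv Rk -> rt Rk <= etime e -> levels_at_most st (S L) ->
  edge_post E s ts k L e st st1.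
Proof.
  intro Hh. destruct Hh; intros.
  - eapply append_post; eauto.
  - eapply update_post; eauto.
  - eapply append_post; eauto.
  - eapply skip_post; eauto.
Qed.

(** Handling the chosen edges one target at a time: the store stays well
    formed, and every edge of [B] towards a processed target is covered
    (the chosen edge has the smallest time among them). *)
Lemma process_post {V : Type} {E : list (edge V)} {s ts k Rk B vs} {st st' : bstate V} :
  process k (rd Rk) B st vs st' ->
  wf_store E s ts (S k) st -> nth_error (recs st) k = Some Rk ->
  (forall e, In e B -> In e E /\ esrc e = rv Rk /\ rt Rk <= etime e) ->
  levels_at_most st (S (rd Rk)) ->
  wf_store E s ts (S k) st' /\ levels_at_most st' (S (rd Rk)) /\ refines st st' /\
  agree_below (S k) (recs st) (recs st') /\
  (forall e, In e B -> In (etgt e) vs -> reached st' (S (rd Rk)) (etgt e) (etime e)).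
Proof.
  intro Hp. induction Hp as [st|st v vs e st1 st2 HeB Hev Hmin Hh Hp IH];
    intros Hwf HRk HB Hlev.
  - refine (conj Hwf (conj Hlev (conj (refines_refl st) (conj (fun _ _ => eq_refl) _)))).
    intros e _ [].
  - destruct (HB _ HeB) as (HeE & Hsrc & Hlate).
    pose proof (handle_post Hh Hwf HRk eq_refl HeE Hsrc Hlate Hlev) as Hpost.
    assert (HRk1 : nth_error (recs st1) k = Some Rk)
      by (rewrite (post_prefix Hpost) by lia; exact HRk).
    destruct (IH (post_wf Hpost) HRk1 HB (post_levels Hpost))
      as (Hwf2 & Hlev2 & Href2 & Hagree2 & Hcov2).
    split; [exact Hwf2|]. split; [exact Hlev2|].
    split; [exact (refines_trans (post_refines Hpost) Href2)|]. split.
    + intros j Hj. rewrite Hagree2, (post_prefix Hpost); auto.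
    + intros e' He' [Hv|Hin]; auto.
      apply (reached_refines Href2).
      apply (reached_weaken (le_n _) (Hmin e' He' (eq_sym Hv))).
      rewrite <- Hv, <- Hev. exact (post_reached Hpost).
Qed.

Lemma wf_pop {V : Type} {E : list (edge V)} {s ts k} {st : bstate V} {r q} :
  wf_store E s ts k st -> queue st = r :: q ->
  r = k /\ (k < length (recs st))%nat /\
  wf_store E s ts (S k) (mkState (recs st) q (Defs.sigma st) (trav st)).
Proof.
  intros Hwf Hq. pose proof (wf_queue Hwf) as Hq0. rewrite Hq in Hq0.
  destruct (length (recs st) - k)%nat as [|m] eqn:Hm; [discriminate|].
  simpl in Hq0. injection Hq0 as -> ->.
  split; [reflexivity|]. split; [lia|].
  destruct Hwf as [_ Hpop Hroot Hlink Hmono Hsle Hsat Htrav].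
  constructor; simpl; auto.
  - f_equal. lia.
  - lia.
  - intros i r Hi. destruct (Hlink _ _ Hi) as [Hr0|Hl]; [left; exact Hr0|right].
    exact (tree_link_mono (fun _ _ => eq_refl) (le_S _ _ (le_n _)) Hl).
  - intros e He. destruct (Htrav _ He) as (j & rj & Hj & Hrj & Hr).
    exists j, rj. repeat split; auto.
Qed.

(** A loop iteration pops record [k], and afterwards every feasible edge out
    of it is covered: either it was traversed earlier by a record of no larger
    level, or it lies in [B] and was just handled. *)
Lemma step_inv {V : Type} {E : list (edge V)} {s ts k} {st st' : bstate V} :
  bfs_step E st st' -> bfs_inv E s ts k st -> bfs_inv E s ts (S k) st'.
Proof.
  intros [st0 r q Rk B vs st1 Hq HRk HBdef _ Hvs Hp] Hinv.
  destruct (wf_pop (inv_wf Hinv) Hq) as (-> & Hk & Hwfp).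
  assert (HB : forall e, In e B -> In e E /\ esrc e = rv Rk /\ rt Rk <= etime e)
    by (intros e He; apply HBdef in He; tauto).
  destruct (process_post Hp Hwfp HRk HB (inv_levels Hinv Hk HRk))
    as (Hwf1 & Hlev1 & Href1 & Hagree1 & Hcov1).
  assert (HRk1 : nth_error (recs st1) k = Some Rk) by (rewrite Hagree1 by lia; exact HRk).
  constructor; [exact Hwf1| |].
  - intros _ rk Hrk j rj Hj.
    pose proof (wf_levels Hwf1 (le_S _ _ (le_n k)) HRk1 Hrk). pose proof (Hlev1 _ _ Hj). lia.
  - intros i ri Hi Hri e He Hsrc Hlate.
    destruct (Nat.eq_dec i k) as [->|Hik].
    +
      rewrite HRk1 in Hri. injection Hri as <-.
      destruct (classic (In e (trav st0))) as [Ht|Ht].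
      * destruct (wf_traversed (inv_wf Hinv) Ht) as (j & rj & Hj & Hrj & Hr).
        apply (reached_refines Href1).
        apply (reached_weaken (d := S (rd rj)) (t := etime e)); [|lra|exact Hr].
        apply le_n_S, (wf_levels (inv_wf Hinv) (Nat.lt_le_incl _ _ Hj) Hrj HRk).
      * apply Hcov1; [apply HBdef; auto|]. apply Hvs. exists e. split; auto. apply HBdef; auto.
    + assert (Hri0 : nth_error (recs st0) i = Some ri) by (rewrite <- Hagree1 by lia; exact Hri).
      apply (reached_refines Href1). apply (inv_explored Hinv (i := i)); auto. lia.
Qed.

Lemma init_inv {V : Type} (E : list (edge V)) {s ts} {st : bstate V} :
  bfs_init s ts st -> bfs_inv E s ts 0 st.
Proof.
  intros (Hr & Hq & Hs & Hnone & Ht).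
  assert (Honly : forall i r, nth_error (recs st) i = Some r -> i = O /\ r = root s ts).
  { intros i r H. rewrite Hr in H. destruct i as [|[|i]]; simpl in H; try discriminate.
    injection H as <-. auto. }
  constructor.
  - constructor.
    + rewrite Hq, Hr. reflexivity.
    + lia.
    + rewrite Hr. reflexivity.
    + intros i r H. left. exact (Honly _ _ H).
    + intros i j ri rj _ Hi Hj.
      destruct (Honly _ _ Hi) as [_ ->], (Honly _ _ Hj) as [_ ->]. lia.
    + intros i r H. destruct (Honly _ _ H) as [_ ->]. exists ts. split; [exact Hs|simpl; lra].
    + intros v tau H. destruct (classic (v = s)) as [->|Hvs].
      * rewrite Hs in H. injection H as <-. exists O, (root s ts). rewrite Hr. auto.
      * rewrite Hnone in H by exact Hvs. discriminate.
    + intros e H. rewrite Ht in H. destruct H.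
  - intros _ rk Hrk j rj Hj. destruct (Honly _ _ Hj) as [_ ->]. simpl. lia.
  - intros i ri Hi. lia.
Qed.

Lemma reach_inv {V : Type} {E : list (edge V)} {s ts} {st stf : bstate V} :
  bfs_reach E st stf -> forall k, bfs_inv E s ts k st -> exists k', bfs_inv E s ts k' stf.
Proof.
  intro H. induction H as [st|st st1 st2 Hs Hr IH]; intros k Hinv; eauto.
  exact (IH (S k) (step_inv Hs Hinv)).
Qed.

(** With an empty queue every record has been popped, so every feasible edge
    out of every record is covered. *)
Lemma final_explored {V : Type} {E : list (edge V)} {s ts k} {st : bstate V} :
  bfs_inv E s ts k st -> queue st = [] ->
  forall e, In e E -> forall i r, nth_error (recs st) i = Some r ->
  esrc e = rv r -> rt r <= etime e -> reached st (S (rd r)) (etgt e) (etime e).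
Proof.
  intros Hinv Hq e He i r Hi Hsrc Hlate.
  apply (inv_explored Hinv (i := i)); auto.
  pose proof (wf_queue (inv_wf Hinv)) as Hq0. pose proof (wf_popped (inv_wf Hinv)).
  pose proof (nth_error_lt _ _ _ Hi). rewrite Hq in Hq0.
  destruct (length (recs st) - k)%nat eqn:Hm; [lia|discriminate].
Qed.

(** Unlike
    [is_tpath] it allows the empty walk, which makes it closed under
    extension by one edge. *)

Inductive twalk {V : Type} (E : list (edge V)) : V -> R -> list (edge V) -> V -> R -> Prop :=
| TW_nil x t : twalk E x t [] x t
| TW_cons x t e P y t' :
    esrc e = x -> In e E -> t <= etime e -> twalk E (etgt e) (etime e) P y t' ->
    twalk E x t (e :: P) y t'.

Lemma twalk_snoc {V : Type} {E : list (edge V)} {x t P y t' e} :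
  twalk E x t P y t' -> In e E -> esrc e = y -> t' <= etime e ->
  twalk E x t (P ++ [e]) (etgt e) (etime e).
Proof.
  intros Hw He Hsrc Hle. induction Hw; simpl.
  - constructor; auto. constructor.
  - constructor; auto.
Qed.

Lemma twalk_tpath {V : Type} {E : list (edge V)} {x t P y t'} :
  twalk E x t P y t' -> P <> [] -> is_tpath E x y t P.
Proof.
  induction 1 as [x t|x t e P y t' Hsrc He Hle Hw IH]; intro Hne; [contradiction|].
  simpl. repeat split; auto.
  destruct P as [|e' P].
  - inversion Hw. reflexivity.
  - apply IH. discriminate.
Qed.

Lemma tpath_twalk {V : Type} {E : list (edge V)} {P} : forall {x y t},
  is_tpath E x y t P -> exists t', twalk E x t P y t'.
Proof.
  induction P as [|e P IH]; intros x y t H; [destruct H|].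
  destruct H as (Hsrc & He & Hle & Hrest).
  destruct P as [|e' P].
  - exists (etime e). subst y. constructor; auto. constructor.
  - destruct (IH _ _ _ Hrest) as (t' & Hw). exists t'. constructor; auto.
Qed.

Lemma twalk_nil_inv {V : Type} {E : list (edge V)} {x t y t'} :
  twalk E x t [] y t' -> y = x.
Proof. intro H. inversion H. reflexivity. Qed.

Lemma tree_walk {V : Type} {E : list (edge V)} {s ts k} {st : bstate V} :
  wf_store E s ts k st -> forall {i r}, nth_error (recs st) i = Some r ->
  exists P, tree_path (recs st) i P /\ length P = rd r /\ twalk E s ts P (rv r) (rt r).
Proof.
  intros Hwf i. induction i as [i IH] using (well_founded_induction lt_wf). intros r Hi.
  destruct (wf_link Hwf Hi) as [[-> ->]|[j rj e Hji _ Hp He Hj HeE Hsrc Htgt Htime Hle Hd]].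
  - exists []. repeat split; constructor.
  - destruct (IH j Hji rj Hj) as (P & Htp & Hlen & Hw).
    exists (P ++ [e]). split; [econstructor; eauto|]. split.
    + rewrite length_app, Hlen, Hd. simpl. lia.
    + rewrite <- Htgt, <- Htime. exact (twalk_snoc Hw HeE Hsrc Hle).
Qed.

Lemma walk_reached {V : Type} {E : list (edge V)} {st : bstate V} :
  (forall e, In e E -> forall i r, nth_error (recs st) i = Some r ->
     esrc e = rv r -> rt r <= etime e -> reached st (S (rd r)) (etgt e) (etime e)) ->
  forall {x t P y t' m}, twalk E x t P y t' -> reached st m x t ->
  reached st (m + length P) y t'.
Proof.
  intros Hcover x t P y t' m Hw. revert m.
  induction Hw as [x t|x t e P y t' Hsrc He Hle Hw IH]; intros m Hx.
  - rewrite Nat.add_0_r. exact Hx.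
  - destruct Hx as (j & rj & Hj & Hv & Hd & Ht).
    simpl. rewrite <- Nat.add_succ_comm. apply IH.
    apply (reached_weaken (d := S (rd rj)) (t := etime e)); [lia|lra|].
    apply (Hcover e He j); auto; [congruence|lra].
Qed.

Theorem mainTheorem18 (V : Type) (E : list (edge V)) (s : V) (ts : R) :
  (exists lV : list V, forall x, In x lV) ->
  NoDup E ->
  (forall e, In e E -> esrc e <> etgt e) ->
  forall st0 stf : bstate V,
    bfs_init s ts st0 -> bfs_reach E st0 stf -> queue stf = [] ->
    forall v : V, v <> s ->
      (forall (i : nat) (r : brec V),
         nth_error (recs stf) i = Some r -> rv r = v ->
         (forall (j : nat) (r' : brec V),
            nth_error (recs stf) j = Some r' -> rv r' = v -> (rd r <= rd r')%nat) ->
         exists P, tree_path (recs stf) i P /\ shortest_tpath E s v ts P)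
      /\
      ((~ exists (i : nat) (r : brec V), nth_error (recs stf) i = Some r /\ rv r = v) ->
       forall P, ~ is_tpath E s v ts P).
Proof.
  intros _ _ _ st0 stf Hinit Hrun Hq v Hvs.
  destruct (reach_inv Hrun 0 (init_inv E Hinit)) as (k & Hinv).
  pose proof (final_explored Hinv Hq) as Hcover.
  assert (Hroot : reached stf 0 s ts).
  { exists O, (root s ts). split; [exact (wf_root (inv_wf Hinv))|]. simpl. repeat split; auto. lra. }
  (* Any temporal path to [v] yields a record of [v] of level at most its
     length (via [walk_reached] from the root). *)
  split.
  - intros i r Hi Hrv Hmin.
    destruct (tree_walk (inv_wf Hinv) Hi) as (P & Htp & Hlen & Hw).
    exists P. split; [exact Htp|]. rewrite Hrv in Hw.
    split.
    + apply (twalk_tpath Hw). intros ->. apply Hvs. exact (twalk_nil_inv Hw).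
    + intros P' HP'. destruct (tpath_twalk HP') as (t' & Hw').
      destruct (walk_reached Hcover Hw' Hroot) as (j & rj & Hj & Hv & Hd & _).
      rewrite Hlen. specialize (Hmin _ _ Hj Hv). simpl in Hd. lia.
  - intros Hnone P HP. destruct (tpath_twalk HP) as (t' & Hw).
    destruct (walk_reached Hcover Hw Hroot) as (j & rj & Hj & Hv & _).
    apply Hnone. eauto.
Qed.
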